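(* For all $m,n\ge 1$ one has $K_{m,n}(x,y)=K_{m,n}(y,x)$.
   Context: Let $m,n\ge 1$. $K_{m,n}$ is the complete bipartite graph with vertex set $V=A_m\sqcup B_n$, $A_m=\{a_1,\dots,a_m\}$, $B_n=\{b_1,\dots,b_n\}$, with exactly one edge $\{a_i,b_j\}$ for every $i,j$; $a_m$ is the sink. A configuration is a function $u:V\to\mathbb Z$; $\mathrm{degree}(u)=\sum_c u_c$. For $c\in V$ with graph degree $d_c$, $\Delta^{(c)}=d_c e_c-\sum_{c'\text{ adjacent to }c}e_{c'}$ ($e_c$ the indicator of $c$), $\Delta^{(C)}=\sum_{c\in C}\Delta^{(c)}$. Toppling equivalence: difference in the integer span of the $\Delta^{(c)}$; effective: toppling equivalent to a non-negative configuration; $\mathrm{rank}(u)=-1+\min\{\mathrm{degree}(f): f\ge0,\ u-f\text{ not effective}\}$. $u$ is parking if $u_c\ge0$ for $c\ne a_m$ and for every non-empty $C\subseteq V\setminus\{a_m\}$, $u-\Delta^{(C)}$ has a negative value at a vertex other than $a_m$; sorted if $u_{a_1}\le\dots\le u_{a_{m-1}}$ and $u_{b_1}\le\dots\le u_{b_n}$ (no condition at the sink). For a parking sorted $u$ set $\mathrm{xpara}(u)=(m-1)(n-1)+\mathrm{rank}(u)-\mathrm{degree}(u)$ and $\mathrm{ypara}(u)=\mathrm{rank}(u)+1$ (both are non-negative integers). Define the formal power series $K_{m,n}(x,y)=\sum_u x^{\mathrm{xpara}(u)}y^{\mathrm{ypara}(u)}$, the sum over all parking sorted configurations $u$ on $K_{m,n}$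 (all sink values allowed); equivalently $K_{m,n}(x,y)=x^{(m-1)(n-1)}y\,\widetilde K_{m,n}(x^{-1},xy)$ where $\widetilde K_{m,n}(d,r)=\sum_u d^{\mathrm{degree}(u)}r^{\mathrm{rank}(u)}$. *)

From HB Require Import structures.
From mathcomp Require Import all_boot all_order all_algebra.
Set Implicit Arguments. Unset Strict Implicit. Unset Printing Implicit Defensive.
Import Order.TTheory GRing.Theory Num.Theory.
Local Open Scope ring_scope.

(* Vertices of K_{m,n}: inl i = a_{i+1} (i : 'I_m), inr j = b_{j+1} (j : 'I_n). *)
Definition vert (m n : nat) : finType := ('I_m + 'I_n)%type.

(* The sink a_m, i.e. inl i with i = m-1 (0-indexed). *)
Definition is_sink (m n : nat) (c : vert m n) : bool :=
  match c with inl i => (nat_of_ord i == m.-1)%N | inr _ => false end.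

Definition config (m n : nat) := vert m n -> int.

Definition adj (m n : nat) (c c' : vert m n) : bool :=
  match c, c' with
  | inl _, inr _ => true
  | inr _, inl _ => true
  | _, _ => false
  end.

Definition gdeg (m n : nat) (c : vert m n) : int :=
  (#|[pred c' | adj c c']|)%:Z.

Definition degree (m n : nat) (u : config m n) : int := \sum_(c : vert m n) u c.

Definition Delta (m n : nat) (c : vert m n) : config m n :=
  fun c' => (if c' == c then gdeg c else 0) - (if adj c c' then 1 else 0).

Definition DeltaSet (m n : nat) (C : {set vert m n}) : config m n :=
  fun c' => \sum_(c in C) Delta c c'.

Definition topp_equiv (m n : nat) (u v : config m n) : Prop :=
  exists z : vert m n -> int,
    forall c', u c' - v c' = \sum_(c : vert m n) z c * Delta c c'.

Definition nonneg (m n : nat) (f : config m n) : Prop := forall c, 0 <= f c.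

Definition effective (m n : nat) (u : config m n) : Prop :=
  exists w : config m n, nonneg w /\ topp_equiv u w.

(* has_rank u r  <->  r = -1 + min{degree f : f >= 0, u - f not effective}. *)
Definition has_rank (m n : nat) (u : config m n) (r : int) : Prop :=
  (exists f : config m n,
      nonneg f /\ degree f = r + 1 /\ ~ effective (fun c => u c - f c)) /\
  (forall f : config m n,
      nonneg f -> degree f < r + 1 -> effective (fun c => u c - f c)).

Definition parking (m n : nat) (u : config m n) : Prop :=
  (forall c, ~~ is_sink c -> 0 <= u c) /\
  (forall C : {set vert m n}, C != set0 -> (forall c, c \in C -> ~~ is_sink c) ->
     exists c, ~~ is_sink c /\ u c - DeltaSet C c < 0).

Definition sorted_conf (m n : nat) (u : config m n) : Prop :=
  (forall i i' : 'I_m, (i <= i')%N -> (i' < m.-1)%N -> u (inl i) <= u (inl i')) /\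
  (forall j j' : 'I_n, (j <= j')%N -> u (inr j) <= u (inr j')).

(* u is a parking sorted configuration with xpara(u) = x and ypara(u) = y. *)
Definition parking_sorted_with (m n : nat) (x y : int) (u : config m n) : Prop :=
  parking u /\ sorted_conf u /\
  exists r : int, has_rank u r /\
    x = ((m.-1 * n.-1)%N)%:Z + r - degree u /\ y = r + 1.

(* The map u |-> sort (reduce (K - u)), where K_c = d_c - 2 is the canonical
   configuration, reduce picks the unique parking representative of a toppling
   class and sort relabels the non-sink a's and the b's increasingly, is an
   involution on parking sorted configurations.  By the Riemann--Roch theorem of
   Baker and Norine, rank (K - u) = rank u - deg u + g - 1 with g = (m-1)(n-1), so
   it exchanges xpara and ypara.  Riemann--Roch is proved as by Cori and Le Borgne:
   for an injective ordering pi of the vertices, nu pi (number of earlier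
   neighbours minus one) is not effective and K - nu pi = nu (-pi); every
   non-effective configuration is equivalent to one below some nu pi (its parking
   representative is below nu pi for the order in which Dhar's algorithm burns
   it); hence rank u + 1 is the least degree of the positive part of u' - nu pi
   over u' ~ u and pi, and reversing pi turns this quantity for u into the one
   for K - u. *)

From HB Require Import structures.
From mathcomp Require Import all_boot all_order all_algebra all_fingroup.
From mathcomp Require Import ring zify.
From Stdlib Require Import Classical ClassicalEpsilon.
From Stdlib Require Import FunctionalExtensionality ProofIrrelevance.
Set Implicit Arguments. Unset Strict Implicit. Unset Printing Implicit Defensive.
Import Order.TTheory GRing.Theory Num.Theory.
Local Open Scope ring_scope.

Lemma natz_mulrn (a b : nat) : (a%:Z) *+ b = (a * b)%N%:Z.
Proof. by rewrite -natz -mulrnA natz. Qed.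

Lemma ex_maxP (T : finType) (P : pred T) (F : T -> int) x0 :
  P x0 -> exists2 x, P x & forall y, P y -> F y <= F x.
Proof. by move=> Px0; case: (arg_maxP F Px0) => x Px H; exists x => // y /H. Qed.

Lemma ex_minP (T : finType) (P : pred T) (F : T -> int) x0 :
  P x0 -> exists2 x, P x & forall y, P y -> F x <= F y.
Proof. by move=> Px0; case: (arg_minP F Px0) => x Px H; exists x => // y /H. Qed.

Section PrefixSorting.
Variables N L : nat.
Implicit Types (x : 'I_N -> int) (a : {perm 'I_N}).

Definition prefix_perm a := forall i : 'I_N, (a i < L)%N = (i < L)%N.

Definition sorted_prefix x :=
  forall i i' : 'I_N, (i <= i')%N -> (i' < L)%N -> x i <= x i'.

(* Swapping an inversion strictly increases this weight, so a maximiser is sorted. *)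
Definition rearr_weight x a := \sum_(k : 'I_N | (k < L)%N) (k : nat)%:Z * x (a k).

Lemma rearr_weight_tperm x a (i i' : 'I_N) : (i < L)%N -> (i' < L)%N -> i != i' ->
  rearr_weight x (tperm i i' * a)%g =
  rearr_weight x a + ((i' : nat)%:Z - (i : nat)%:Z) * (x (a i) - x (a i')).
Proof.
move=> iL i'L neq_ii'.
have split2 (F : 'I_N -> int) : \sum_(k : 'I_N | (k < L)%N) F k =
    F i + (F i' + \sum_(k : 'I_N | ((k < L)%N && (k != i)) && (k != i')) F k).
  by rewrite (bigD1 i) //= (bigD1 i') //= i'L eq_sym neq_ii'.
rewrite /rearr_weight !split2 !permM tpermL tpermR.
rewrite [in LHS](eq_bigr (fun k : 'I_N => (k : nat)%:Z * x (a k))); first by ring.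
by move=> k /andP [/andP [_ ki] ki']; rewrite permM tpermD // eq_sym.
Qed.

Lemma exists_sorting_perm x : exists2 a, prefix_perm a & sorted_prefix (fun i => x (a i)).
Proof.
pose P := [pred a : {perm 'I_N} | [forall i, (a i < L)%N == (i < L)%N]].
have P1 : P 1%g by apply/forallP => i; rewrite perm1.
have [a Pa a_max] := ex_maxP (rearr_weight x) P1.
have a_pfx : prefix_perm a by move=> i; move/forallP: Pa => /(_ i) /eqP.
exists a => // i i' le_ii' i'L; rewrite leNgt; apply/negP => lt_x.
have iL : (i < L)%N := leq_ltn_trans le_ii' i'L.
have neq_ii' : i != i' by apply: contraTneq lt_x => ->; rewrite ltxx.
have Pb : P (tperm i i' * a)%g.
  by apply/forallP => k; rewrite permM a_pfx; case: tpermP => [->|->|] //; rewrite ?iL ?i'L.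
have gain : 0 < ((i' : nat)%:Z - (i : nat)%:Z) * (x (a i) - x (a i')).
  by rewrite mulr_gt0 // subr_gt0 // ltz_nat ltn_neqAle neq_ii' le_ii'.
by have := a_max _ Pb; rewrite rearr_weight_tperm // gerDl leNgt gain.
Qed.

Lemma prefix_permM a a' : prefix_perm a -> prefix_perm a' -> prefix_perm (a' * a)%g.
Proof. by move=> pa pa' i; rewrite permM pa pa'. Qed.

Definition down_closed (A : {set 'I_N}) :=
  forall k k' : 'I_N, k \in A -> (k' <= k)%N -> k' \in A.

Lemma eq_down_closed (A B : {set 'I_N}) :
  down_closed A -> down_closed B -> #|A| = #|B| -> A = B.
Proof.
move=> dA dB cardAB.
have sAB : A \subset B.
  apply/subsetP => a aA; apply: contraT => aB.
  have : B \proper A.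
    apply/properP; split; last by exists a.
    apply/subsetP => b bB; apply: contraT => bA.
    have lt_ba : (b < a)%N by rewrite ltnNge; apply: contra aB; exact: dB bB.
    have lt_ab : (a < b)%N by rewrite ltnNge; apply: contra bA; exact: dA aA.
    by have := ltn_trans lt_ba lt_ab; rewrite ltnn.
  by move/proper_card; rewrite cardAB ltnn.
by apply/eqP; rewrite eqEcard sAB cardAB leqnn.
Qed.

Lemma sublevel_down_closed x (t : int) : sorted_prefix x ->
  down_closed [set k : 'I_N | (k < L)%N && (x k <= t)].
Proof.
move=> sx k1 k2; rewrite !inE => /andP [k1L xk1] le21.
by rewrite (leq_ltn_trans le21 k1L) (le_trans (sx _ _ le21 k1L) xk1).
Qed.

Lemma sorted_prefix_perm_eq x a : prefix_perm a -> sorted_prefix x ->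
  sorted_prefix (fun i => x (a i)) -> forall i : 'I_N, (i < L)%N -> x (a i) = x i.
Proof.
move=> a_pfx sx sxa.
(* Both sublevel sets are initial segments of the same size. *)
have sublevel (t : int) (k : 'I_N) : (k < L)%N -> (x k <= t) = (x (a k) <= t).
  move=> kL; have dA := sublevel_down_closed (t := t) sx.
  have dB := sublevel_down_closed (t := t) sxa.
  have card_eq : #|[set k0 : 'I_N | (k0 < L)%N && (x k0 <= t)]| =
                 #|[set k0 : 'I_N | (k0 < L)%N && (x (a k0) <= t)]|.
    rewrite -(card_preimset _ (@perm_inj _ a)); apply: eq_card => k0.
    by rewrite !inE a_pfx.
  by have /setP /(_ k) := eq_down_closed dA dB card_eq; rewrite !inE kL.
move=> i iL; apply/eqP; rewrite eq_le.
by rewrite -sublevel // lexx /= sublevel // lexx.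
Qed.

End PrefixSorting.

Section Laplacian.
Variables m n : nat.
Local Notation V := (vert m n).
Local Notation cfg := (config m n).
Implicit Types (u v w f : cfg) (z pi : V -> int).

Lemma adjC (c c' : V) : adj c c' = adj c' c.
Proof. by case: c; case: c'. Qed.

Lemma adjxx (c : V) : adj c c = false.
Proof. by case: c. Qed.

Lemma sum_indicator (P : pred V) :
  \sum_(c : V) (if P c then 1 else 0) = (#|P|)%:Z :> int.
Proof. by rewrite -big_mkcond /= sumr_const natz. Qed.

Lemma gdegE (c : V) : gdeg c = \sum_(w : V) (if adj c w then 1 else 0).
Proof. by rewrite sum_indicator. Qed.

Lemma sum_vert (F : V -> int) :
  \sum_(c : V) F c = \sum_(i : 'I_m) F (inl i) + \sum_(j : 'I_n) F (inr j).
Proof. exact: big_sumType. Qed.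

Lemma gdeg_inl i : gdeg (inl i : V) = n%:Z.
Proof. by rewrite gdegE sum_vert /= big1 // add0r sumr_const card_ord natz. Qed.

Lemma gdeg_inr j : gdeg (inr j : V) = m%:Z.
Proof. by rewrite gdegE sum_vert /= [X in _ + X]big1 // addr0 sumr_const card_ord natz. Qed.

Lemma sum_gdeg : \sum_(c : V) gdeg c = (2 * (m * n))%N%:Z.
Proof.
rewrite sum_vert; under eq_bigr do rewrite gdeg_inl.
under [X in _ + X]eq_bigr do rewrite gdeg_inr.
by rewrite !sumr_const !card_ord !natz_mulrn; lia.
Qed.

Definition lap z : cfg := fun c' => \sum_(c : V) z c * Delta c c'.

Lemma lapE z c' : lap z c' = \sum_(c : V) (if adj c' c then z c' - z c else 0).
Proof.
rewrite /lap /Delta.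
under eq_bigr => c _ do rewrite mulrBr.
rewrite sumrB (bigD1 c') //= eqxx big1 => [|c]; last first.
  by rewrite eq_sym => /negbTE ->; rewrite mulr0.
rewrite addr0.
have -> : \sum_c z c * (if adj c c' then 1 else 0) = \sum_c (if adj c' c then z c else 0).
  by apply: eq_bigr => c _; rewrite adjC; case: ifP; rewrite ?mulr1 ?mulr0.
have -> : \sum_c (if adj c' c then z c' - z c else 0) =
   \sum_c (if adj c' c then z c' else 0) - \sum_c (if adj c' c then z c else 0).
  by rewrite -sumrB; apply: eq_bigr => c _; case: ifP; rewrite ?subr0.
congr (_ - _); rewrite gdegE mulr_sumr; apply: eq_bigr => c _.
by case: ifP; rewrite ?mulr1 ?mulr0.
Qed.

Lemma degree_lap z : degree (lap z) = 0.
Proof.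
rewrite /degree /lap exchange_big /= big1 // => c _.
rewrite -mulr_sumr /Delta sumrB (bigD1 c) //= eqxx big1 ?addr0 => [|c' /negbTE ->] //.
by rewrite gdegE subrr mulr0.
Qed.

Lemma lapD z1 z2 c : lap (fun x => z1 x + z2 x) c = lap z1 c + lap z2 c.
Proof. by rewrite /lap -big_split; apply: eq_bigr => ? _; rewrite mulrDl. Qed.

Lemma lapN z c : lap (fun x => - z x) c = - lap z c.
Proof. by rewrite /lap -sumrN; apply: eq_bigr => ? _; rewrite mulNr. Qed.

Lemma degreeB u v : degree (fun x => u x - v x) = degree u - degree v.
Proof. exact: sumrB. Qed.

Lemma lap_const z k c : (forall x, z x = k) -> lap z c = 0.
Proof. by move=> zk; rewrite lapE big1 // => y _; rewrite !zk subrr; case: adj. Qed.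

Lemma topp_equiv_refl u : topp_equiv u u.
Proof. by exists (fun _ => 0) => c; rewrite subrr big1 // => ? _; rewrite mul0r. Qed.

Lemma topp_equiv_sym u v : topp_equiv u v -> topp_equiv v u.
Proof.
case=> z Hz; exists (fun c => - z c) => c'.
by have := lapN z c'; rewrite /lap => ->; rewrite -Hz opprB.
Qed.

Lemma topp_equiv_trans u v w : topp_equiv u v -> topp_equiv v w -> topp_equiv u w.
Proof.
case=> z1 H1 [z2 H2]; exists (fun c => z1 c + z2 c) => c'.
by have := lapD z1 z2 c'; rewrite /lap => ->; rewrite -H1 -H2 addrA subrK.
Qed.

Lemma topp_equiv_degree u v : topp_equiv u v -> degree u = degree v.
Proof.
case=> z Hz; apply/eqP; rewrite -subr_eq0 /degree -sumrB.
by rewrite (eq_bigr _ (fun c _ => Hz c)) -/(degree (lap z)) degree_lap.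
Qed.

Lemma topp_equivB u v f : topp_equiv u v ->
  topp_equiv (fun c => u c - f c) (fun c => v c - f c).
Proof. by case=> z Hz; exists z => c; rewrite -Hz opprB addrA subrK. Qed.

Lemma topp_equivD u v f : topp_equiv u v ->
  topp_equiv (fun c => u c + f c) (fun c => v c + f c).
Proof. by case=> z Hz; exists z => c; rewrite -Hz opprD addrACA subrr addr0. Qed.

Lemma effective_topp_equiv u v : topp_equiv u v -> effective u -> effective v.
Proof.
move=> u_v [w [w_ge0 u_w]]; exists w; split => //.
exact: topp_equiv_trans (topp_equiv_sym u_v) u_w.
Qed.

Lemma effective_ext u v : u =1 v -> effective u -> effective v.
Proof. by move=> /functional_extensionality ->. Qed.

Lemma rank_topp_equiv u v r : topp_equiv u v -> has_rank u r -> has_rank v r.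
Proof.
move=> u_v [[f [f_ge0 [deg_f uf_neff]]] rank_min]; split.
  exists f; split => //; split => // vf_eff; apply: uf_neff.
  exact: effective_topp_equiv (topp_equiv_sym (topp_equivB f u_v)) vf_eff.
move=> g g_ge0 deg_g.
exact: effective_topp_equiv (topp_equivB g u_v) (rank_min g g_ge0 deg_g).
Qed.

Definition canon : cfg := fun x => gdeg x - 2.

Lemma degree_canon : degree canon = (2 * (m * n))%N%:Z - (2 * (m + n))%N%:Z.
Proof.
by rewrite /degree /canon sumrB sum_gdeg sumr_const card_sum !card_ord natz_mulrn; lia.
Qed.

Lemma canonK u : (fun x => canon x - (canon x - u x)) = u.
Proof. by apply: functional_extensionality => x; rewrite opprB addrC subrK. Qed.

Lemma topp_equiv_canon u v : topp_equiv u v ->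
  topp_equiv (fun c => canon c - u c) (fun c => canon c - v c).
Proof.
case=> z Hz; exists (fun c => - z c) => c.
by have := lapN z c; rewrite /lap => ->; rewrite -Hz; ring.
Qed.

(* nu pi is the configuration nu_O of Baker--Norine for the acyclic orientation O
   induced by the vertex ordering pi: indegree minus one. *)
Definition nu (pi : V -> int) : cfg :=
  fun x => (#|[pred y | adj x y && (pi y < pi x)]|)%:Z - 1.

Lemma canon_subr_nu pi : injective pi -> forall x, canon x - nu pi x = nu (fun y => - pi y) x.
Proof.
move=> pi_inj x; rewrite /canon /nu gdegE -!sum_indicator.
have -> : \sum_c (if adj x c then 1 else 0) =
  \sum_c (if adj x c && (pi c < pi x) then 1 else 0) +
  \sum_c (if adj x c && (- pi c < - pi x) then 1 else 0) :> int.
  rewrite -big_split; apply: eq_bigr => c _ /=; rewrite ltrN2.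
  case xc: (adj x c) => //=.
  have : pi c != pi x by apply/eqP => /pi_inj cx; move: xc; rewrite cx adjxx.
  by case: (ltgtP (pi c) (pi x)).
by rewrite /=; ring.
Qed.

Lemma degree_nu pi : injective pi -> degree (nu pi) = (m * n)%N%:Z - (m + n)%N%:Z.
Proof.
move=> pi_inj.
have deg_sym : degree (nu (fun y => - pi y)) = degree (nu pi).
  rewrite /degree /nu !sumrB; congr (_ - _).
  rewrite -!(eq_bigr _ (fun x _ => sum_indicator _)) /= exchange_big /=.
  by apply: eq_bigr => x _; apply: eq_bigr => y _; rewrite adjC ltrN2.
have : degree (nu pi) + degree (nu (fun y => - pi y)) = degree canon.
  rewrite /degree -big_split; apply: eq_bigr => x _.
  by rewrite -canon_subr_nu //= addrCA subrr addr0.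
rewrite deg_sym degree_canon; lia.
Qed.

Definition indic (C : {set V}) : V -> int := fun x => if x \in C then 1 else 0.

Lemma DeltaSet_lap (C : {set V}) c : DeltaSet C c = lap (indic C) c.
Proof.
rewrite /DeltaSet /lap big_mkcond /=; apply: eq_bigr => c' _.
by rewrite /indic; case: ifP; rewrite ?mul1r ?mul0r.
Qed.

Lemma topp_equiv_fire w (C : {set V}) : topp_equiv w (fun c => w c - DeltaSet C c).
Proof. by exists (indic C) => c; rewrite opprB addrC subrK DeltaSet_lap. Qed.

Lemma DeltaSetE (C : {set V}) c' :
  DeltaSet C c' = \sum_c (if adj c' c then indic C c' - indic C c else 0).
Proof. by rewrite DeltaSet_lap lapE. Qed.

Lemma DeltaSet_in (C : {set V}) c : c \in C ->
  DeltaSet C c = (#|[pred y | adj c y && (y \notin C)]|)%:Z.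
Proof.
move=> cC; rewrite DeltaSetE -sum_indicator; apply: eq_bigr => y _ /=.
by rewrite /indic cC; case: adj => //=; case: (y \in C).
Qed.

Lemma DeltaSet_out (C : {set V}) c : c \notin C -> DeltaSet C c <= 0.
Proof.
move=> cC; rewrite DeltaSetE; apply: sumr_le0 => y _.
by rewrite /indic (negbTE cC); case: adj => //; case: (y \in C).
Qed.

End Laplacian.

Section Parking.
Variables m n : nat.
Hypothesis hm : (0 < m)%N.
Local Notation V := (vert m n).
Local Notation cfg := (config m n).
Implicit Types (u v w : cfg) (z pi : V -> int).

Lemma sink_lt : (m.-1 < m)%N. Proof. by rewrite ltn_predL. Qed.

Definition sink : V := inl (Ordinal sink_lt).

Lemma is_sinkE c : is_sink c = (c == sink).
Proof. by case: c => [i|j] //=; apply/eqP/eqP => [H|[]//]; congr inl; apply: val_inj. Qed.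

Definition nonneg_off w := forall c, ~~ is_sink c -> 0 <= w c.

(* For s minimal for pi where z is maximal, lap z s >= nu pi s + 1, forcing w s < 0. *)
Lemma nu_not_effective pi : ~ effective (nu pi).
Proof.
case=> w [w_ge0 [z Hz]].
have [vm _ vm_max] := ex_maxP z (isT : predT sink).
have [s zs s_min] := ex_minP pi (eqxx (z vm) : [pred v | z v == z vm] vm).
have lap_s : (#|[pred c | adj s c && (pi c < pi s)]|)%:Z <= lap z s.
  rewrite -sum_indicator lapE; apply: ler_sum => c _ /=.
  case: (adj s c) => //=.
  have zc : z c <= z s by rewrite (eqP zs); exact: vm_max.
  case: (boolP (pi c < pi s)) => pi_cs /=; last by lia.
  have : z c != z vm by apply/negP => /s_min; rewrite leNgt pi_cs.
  by rewrite -(eqP zs); lia.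
by have := Hz s; have := w_ge0 s; rewrite -/(lap z s) /nu; lia.
Qed.

(* Dhar's burning algorithm: the fire starts at the sink, and a vertex catches
   fire once it has more burning neighbours than chips. *)
Definition earlier_nbrs (s : seq V) x := #|[pred y | adj x y && (index y s < index x s)%N]|.

Definition burning w (s : seq V) := [/\ uniq s, head sink s = sink, sink \in s &
  forall x, x \in s -> x != sink -> w x < (earlier_nbrs s x)%:Z].

Lemma earlier_nbrs_rcons_old (s : seq V) c x : x \in s ->
  earlier_nbrs (rcons s c) x = earlier_nbrs s x.
Proof.
move=> xs; rewrite /earlier_nbrs -cats1 index_cat xs; apply: eq_card => y.
rewrite !inE index_cat; case: (boolP (y \in s)) => // ys; rewrite (memNindex ys).
have lt_x : (index x s < size s)%N by rewrite index_mem.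
by rewrite !ltnNge (leq_trans (ltnW lt_x) (leq_addr _ _)) (ltnW lt_x).
Qed.

Lemma earlier_nbrs_rcons_new (s : seq V) c : c \notin s ->
  earlier_nbrs (rcons s c) c = #|[pred y | adj c y && (y \in s)]|.
Proof.
move=> cs; rewrite /earlier_nbrs -cats1 index_cat (negbTE cs) /= eqxx addn0.
apply: eq_card => y; rewrite !inE index_cat; case: (boolP (y \in s)) => ys.
  by rewrite index_mem ys.
by rewrite ltnNge leq_addr andbF.
Qed.

Lemma burning_rcons w s : parking w -> burning w s -> (size s < #|V|)%N ->
  exists2 c, c \notin s & burning w (rcons s c).
Proof.
move=> [w_ge0 w_park] [uniq_s head_s sink_s burnt_s] small_s.
pose C := [set x | x \notin s].
have C0 : C != set0.
  apply: contraTneq small_s => C_eq0; rewrite -leqNgt -(card_uniqP uniq_s).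
  apply/subset_leq_card/subsetP => x _; apply: contraT => xs.
  have : x \in C by rewrite inE.
  by rewrite C_eq0 inE.
have C_sink c : c \in C -> ~~ is_sink c.
  by rewrite inE is_sinkE; apply: contra => /eqP ->.
have [c [c_sink Hc]] := w_park C C0 C_sink.
have cC : c \in C.
  apply: contraLR Hc => /DeltaSet_out Delta_le0; rewrite -leNgt; have := w_ge0 c c_sink; lia.
have cs : c \notin s by rewrite inE in cC.
exists c => //; split; first by rewrite rcons_uniq cs.
- by case: (s) head_s sink_s.
- by rewrite mem_rcons inE sink_s orbT.
move=> x; rewrite mem_rcons inE => /orP [/eqP -> | xs] xq.
- rewrite earlier_nbrs_rcons_new //; rewrite DeltaSet_in // subr_lt0 in Hc.
  by rewrite (eq_card (B := [pred y | adj c y && (y \notin C)])) // => y; rewrite !inE negbK.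
- by rewrite earlier_nbrs_rcons_old //; apply: burnt_s.
Qed.

Lemma burning_extend w k s : parking w -> burning w s -> (#|V| - size s)%N = k ->
  exists2 s', burning w s' & size s' = #|V|.
Proof.
move=> w_park; elim: k s => [|k IH] s bs gap_s.
  exists s => //; case: bs => uniq_s _ _ _; apply/eqP.
  by rewrite eqn_leq -{1}(card_uniqP uniq_s) max_card /= -subn_eq0 gap_s.
have small_s : (size s < #|V|)%N by rewrite -subn_gt0 gap_s.
have [c _ bsc] := burning_rcons w_park bs small_s.
by apply: (IH _ bsc); rewrite size_rcons; lia.
Qed.

Lemma burning_order w : parking w -> exists pi : V -> int,
  [/\ injective pi, forall x, x != sink -> w x <= nu pi x & nu pi sink = -1].
Proof.
move=> w_park.
have burn0 : burning w [:: sink].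
  split; rewrite ?mem_seq1 //.
  by move=> x; rewrite mem_seq1 => /eqP ->; rewrite eqxx.
have [s [uniq_s head_s _ burnt_s] size_s] := burning_extend w_park burn0 (erefl _).
have all_s x : x \in s.
  apply: contraT => xs; have : uniq (x :: s) by rewrite /= xs uniq_s.
  move/card_uniqP => /= card_xs.
  by have := max_card (mem (x :: s)); rewrite card_xs size_s ltnn.
exists (fun x => (index x s)%:Z); split.
- by move=> x y /= /eqP; rewrite eqz_nat => /eqP /(index_inj sink (all_s x) (all_s y)).
- move=> x xq; have := burnt_s x (all_s x) xq; rewrite /nu /earlier_nbrs.
  have E : [pred y | adj x y && ((index y s)%:Z < (index x s)%:Z)] =i
           [pred y | adj x y && (index y s < index x s)%N].
    by move=> y; rewrite !inE ltz_nat.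
  by rewrite (eq_card E); lia.
- have idx0 : index sink s = 0%N by case: (s) head_s => [|a t] //= ->; rewrite eqxx.
  rewrite /nu (eq_card (B := pred0)) ?card0 // => y.
  by rewrite !inE idx0 ltz_nat ltn0 andbF.
Qed.

(* If a - b = lap z with a parking and b nonnegative off the sink, the sink fires
   most: otherwise the set of vertices firing most could be fired legally from a. *)
Lemma parking_lap_sink_max (a b : cfg) z : parking a -> nonneg_off b ->
  (forall c, a c - b c = lap z c) -> forall x, z x <= z sink.
Proof.
move=> [a_ge0 a_park] b_ge0 Hz v; rewrite leNgt; apply/negP => lt_v.
have [vm _ vm_max] := ex_maxP z (isT : predT sink).
pose S := [set x | z x == z vm].
have S0 : S != set0 by apply/set0Pn; exists vm; rewrite inE.
have S_sink c : c \in S -> ~~ is_sink c.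
  rewrite inE is_sinkE => /eqP zc; apply/eqP => E; subst c.
  by have := vm_max v isT; lia.
have [c [c_sink Hc]] := a_park S S0 S_sink.
case: (boolP (c \in S)) => cS; last by have := DeltaSet_out cS; have := a_ge0 c c_sink; lia.
have : DeltaSet S c <= lap z c.
  rewrite DeltaSet_in // -sum_indicator lapE; apply: ler_sum => y _ /=.
  move: cS; rewrite inE => /eqP zc; have := vm_max y isT.
  case: adj => //=; case: (boolP (y \in S)); rewrite inE => zy /=; lia.
by have := Hz c; have := b_ge0 c c_sink; lia.
Qed.

Lemma parking_unique (a b : cfg) : parking a -> parking b -> topp_equiv a b -> a = b.
Proof.
move=> a_park b_park [z Hz].
have le_z := parking_lap_sink_max a_park (proj1 b_park) Hz.
have Hz' c : b c - a c = lap (fun x => - z x) c by rewrite lapN /lap -Hz opprB.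
have ge_z := parking_lap_sink_max b_park (proj1 a_park) Hz'.
have z_const x : z x = z sink by have := le_z x; have := ge_z x; lia.
apply: functional_extensionality => c.
by apply/eqP; rewrite -subr_eq0 Hz -/(lap z c) (lap_const _ z_const).
Qed.

End Parking.

Section Reduction.
Variables m n : nat.
Hypotheses (hm : (0 < m)%N) (hn : (0 < n)%N).
Local Notation V := (vert m n).
Local Notation cfg := (config m n).
Local Notation sink := (@sink m n hm).
Implicit Types (u w : cfg) (C : {set V}).

(* Fire the b's K times and the sink (m+1)K times, with K = sum |u|. *)
Lemma exists_nonneg_off_equiv u : exists2 w, nonneg_off w & topp_equiv u w.
Proof.
pose K := \sum_c `|u c|.
have K_ge0 : 0 <= K by rewrite sumr_ge0 // => x _; rewrite normr_ge0.
have u_ge c : - K <= u c.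
  have : `|u c| <= K by rewrite /K (bigD1 c) //= lerDl sumr_ge0 // => x _.
  by have := ler_norm (- u c); rewrite normrN; lia.
clearbody K.
pose z : V -> int := fun x =>
  if x is inl i then (if (i : nat) == m.-1 then (m%:Z + 1) * K else 0) else K.
exists (fun c => u c - lap z c); last by exists z => c; ring.
case=> [i|j] c_sink; rewrite lapE sum_vert /=.
- rewrite big1 // add0r /= (negbTE (c_sink : (i : nat) != m.-1)) sumr_const card_ord.
  have : (0 - K) *+ n <= - K.
    rewrite sub0r mulNrn lerN2; case: (n) hn => // n' _.
    by rewrite mulrS lerDl mulrn_wge0.
  by rewrite subr_ge0 => /le_trans; apply; apply: u_ge.
- rewrite big1_eq addr0 sumrB sumr_const card_ord.
  rewrite [X in _ - (_ - X)](bigD1 (Ordinal (sink_lt hm))) //= eqxx big1 ?addr0; last first.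
    move=> i0 ne_i0; case: ifP => // /eqP E; move: ne_i0.
    have -> : i0 = Ordinal (sink_lt hm) by apply: val_inj.
    by rewrite eqxx.
  rewrite -mulr_natr natz (_ : K * m%:Z - (m%:Z + 1) * K = - K); last by ring.
  by rewrite opprK -lerBlDr sub0r; apply: u_ge.
Qed.

Definition off_sink_mass w := \sum_(x | x != sink) w x.

Definition is_inner_a (x : V) := if x is inl i then (i : nat) != m.-1 else false.

Definition inner_a_mass w := \sum_(x | is_inner_a x) w x.

Lemma inner_a_mass_bounds w : nonneg_off w -> 0 <= inner_a_mass w <= off_sink_mass w.
Proof.
move=> w_ge0.
have ge0 (P : pred V) : (forall x, P x -> ~~ is_sink x) -> 0 <= \sum_(x | P x) w x.
  by move=> PS; apply: sumr_ge0 => x /PS /w_ge0.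
rewrite /off_sink_mass (bigID is_inner_a) /=.
rewrite (eq_bigl is_inner_a) => [|x]; last by apply: andb_idl; rewrite -is_sinkE; case: x.
rewrite ge0 => [|[]] //=; rewrite lerDl ge0 // => x /andP [+ _].
by rewrite is_sinkE.
Qed.

Lemma off_sink_mass_fire w C :
  off_sink_mass (fun c => w c - DeltaSet C c) = off_sink_mass w + DeltaSet C sink.
Proof.
have : \sum_x DeltaSet C x = 0.
  by rewrite (eq_bigr _ (fun x _ => DeltaSet_lap C x)) -/(degree _) degree_lap.
by rewrite /off_sink_mass sumrB (bigD1 sink) //= => /eqP; rewrite addr_eq0 => /eqP ->.
Qed.

Lemma DeltaSet_sink_fire_b C j : sink \notin C -> inr j \in C -> DeltaSet C sink <= -1.
Proof.
move=> sC jC; rewrite DeltaSetE (bigD1 (inr j)) //= /indic (negbTE sC) jC.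
rewrite -[-1]addr0 lerD // ?sub0r //; apply: sumr_le0 => y _.
by case: y => [i|j'] //=; rewrite sub0r oppr_le0; case: ifP.
Qed.

Lemma inner_a_mass_fire_a w C : C != set0 -> (forall c, c \in C -> ~~ is_sink c) ->
  (forall j, inr j \notin C) ->
  DeltaSet C sink = 0 /\ inner_a_mass (fun c => w c - DeltaSet C c) < inner_a_mass w.
Proof.
move=> C0 C_sink noB.
have sC : sink \notin C by apply/negP => /C_sink; rewrite is_sinkE eqxx.
split.
  rewrite DeltaSetE big1 // => -[i|j] _ //=.
  by rewrite /indic (negbTE sC) (negbTE (noB j)) subrr.
have [[i|j] cC] := set0Pn _ C0; last by rewrite (negbTE (noB j)) in cC.
have DeltaSet_ge0 i' : 0 <= DeltaSet C (inl i').
  rewrite DeltaSetE; apply: sumr_ge0 => -[i''|j] _ //=.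
  by rewrite /indic (negbTE (noB j)) subr0; case: ifP.
have DeltaSet_i : 1 <= DeltaSet C (inl i).
  rewrite DeltaSetE (bigD1 (inr (Ordinal hn))) //= /indic cC (negbTE (noB _)) subr0 lerDl.
  by apply: sumr_ge0 => -[i'|j] _ //=; rewrite (negbTE (noB j)) subr0.
have : 1 <= \sum_(x | is_inner_a x) DeltaSet C x.
  have inner_i : is_inner_a (inl i) by exact: C_sink _ cC.
  rewrite (bigD1 (inl i)) //=; apply: (le_trans DeltaSet_i).
  by rewrite lerDl; apply: sumr_ge0 => -[i'|j] //.
by rewrite /inner_a_mass sumrB gtrDl oppr_lt0 => /(lt_le_trans ltr01).
Qed.

Lemma exists_legal_firing w : nonneg_off w -> ~ parking w ->
  exists C, [/\ C != set0, forall c, c \in C -> ~~ is_sink c &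
                nonneg_off (fun c => w c - DeltaSet C c)].
Proof.
move=> w_ge0 w_park; apply: NNPP => no_fire; apply: w_park; split => // C C0 C_sink.
apply: NNPP => all_ge0; apply: no_fire; exists C; split => // c c_sink.
by rewrite leNgt; apply/negP => lt_c; apply: all_ge0; exists c.
Qed.

(* Legal firings decrease (off_sink_mass, inner_a_mass) lexicographically, and
   0 <= inner_a_mass <= off_sink_mass, so this measure decreases. *)
Definition fire_measure w := off_sink_mass w * off_sink_mass w + inner_a_mass w.

Lemma exists_parking_nonneg_off w : nonneg_off w -> exists2 w', parking w' & topp_equiv w w'.
Proof.
move=> w_ge0; have [k lt_k] : exists k : nat, fire_measure w < k%:Z.
  by exists (absz (fire_measure w)).+1; lia.
elim: k w w_ge0 lt_k => [|k IH] w w_ge0 lt_k.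
  by have := inner_a_mass_bounds w_ge0; rewrite /fire_measure in lt_k; nia.
case: (classic (parking w)) => [w_park | w_npark].
  by exists w; last exact: topp_equiv_refl.
have [C [C0 C_sink w'_ge0]] := exists_legal_firing w_ge0 w_npark.
have [w'' w''_park w'_w''] : exists2 w'', parking w'' &
    topp_equiv (fun c => w c - DeltaSet C c) w''.
  apply: IH => //; have := inner_a_mass_bounds w_ge0; have := inner_a_mass_bounds w'_ge0.
  rewrite /fire_measure in lt_k *; rewrite off_sink_mass_fire.
  have sC : sink \notin C by apply/negP => /C_sink; rewrite is_sinkE eqxx.
  case: (boolP [exists j, inr j \in C]) => [/existsP [j jC] | noB].
    by have := DeltaSet_sink_fire_b sC jC; nia.
  have noB' j : inr j \notin C by apply: contra noB => jC; apply/existsP; exists j.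
  have [-> lt_a] := inner_a_mass_fire_a w C0 C_sink noB'; rewrite addr0; nia.
by exists w''; last exact: topp_equiv_trans (topp_equiv_fire w C) w'_w''.
Qed.

Lemma exists_parking u : exists w, parking w /\ topp_equiv u w.
Proof.
have [w w_ge0 u_w] := exists_nonneg_off_equiv u.
have [w' w'_park w_w'] := exists_parking_nonneg_off w_ge0.
by exists w'; split; last exact: topp_equiv_trans u_w w_w'.
Qed.

End Reduction.

Section RiemannRoch.
Variables m n : nat.
Hypotheses (hm : (0 < m)%N) (hn : (0 < n)%N).
Local Notation V := (vert m n).
Local Notation cfg := (config m n).
Local Notation sink := (@sink m n hm).
Implicit Types (D f : cfg) (pi : V -> int).

Lemma not_effective_le_nu D pi : (forall x, D x <= nu pi x) -> ~ effective D.
Proof.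
move=> D_le [F [F_ge0 [z Hz]]]; apply: (@nu_not_effective _ _ hm pi).
exists (fun x => F x + (nu pi x - D x)); split.
  by move=> x; have := F_ge0 x; have := D_le x; lia.
by exists z => c; rewrite -Hz; ring.
Qed.

(* The parking representative of D lies below nu pi for a burning order pi, except
   possibly at the sink; if D is not effective, the sink value is below -1 too. *)
Lemma not_effective_equiv_le_nu D : ~ effective D ->
  exists D' pi, [/\ injective pi, topp_equiv D D' & forall x, D' x <= nu pi x].
Proof.
move=> D_neff; have [w [w_park D_w]] := exists_parking hm hn D.
have [pi [pi_inj w_le nu_sink]] := burning_order hm w_park.
exists w, pi; split => // x.
case: (eqVneq x sink) => [-> | /w_le //]; rewrite nu_sink.
apply: NNPP => w_sink; apply: D_neff; exists w; split => // c.
case: (eqVneq c sink) => [-> | c_sink]; first by lia.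
by apply: (proj1 w_park); rewrite is_sinkE.
Qed.

Definition pos_part (x : int) : int := if 0 <= x then x else 0.

Definition excess_conf D pi : cfg := fun x => pos_part (D x - nu pi x).

Definition excess D pi := degree (excess_conf D pi).

Lemma excess_cut D D' pi : topp_equiv D D' ->
  nonneg (excess_conf D' pi) /\ ~ effective (fun x => D x - excess_conf D' pi x).
Proof.
rewrite /excess_conf => D_D'; split; first by move=> x; rewrite /pos_part; case: ifP.
move=> DE_eff; apply: (@not_effective_le_nu (fun x => D' x - pos_part (D' x - nu pi x)) pi).
  by move=> x; rewrite /pos_part; case: ifP => sgn; lia.
exact: effective_topp_equiv (topp_equivB _ D_D') DE_eff.
Qed.

Lemma excess_lift D f : nonneg f -> ~ effective (fun x => D x - f x) ->
  exists D' pi, [/\ injective pi, topp_equiv D D' & excess D' pi <= degree f].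
Proof.
move=> f_ge0 Df_neff.
have [D'' [pi [pi_inj Df_D'' le_nu]]] := not_effective_equiv_le_nu Df_neff.
exists (fun x => D'' x + f x), pi; split => //.
  have := topp_equivD f Df_D''.
  by have -> : (fun c => D c - f c + f c) = D by apply: functional_extensionality => c; ring.
rewrite /excess /excess_conf; apply: ler_sum => x _; rewrite /pos_part.
by have := le_nu x; have := f_ge0 x; case: ifP; lia.
Qed.

(* Following Cori--Le Borgne: rank D + 1 is the least excess over the class of D. *)
Definition min_excess D k :=
  (exists D' pi, [/\ injective pi, topp_equiv D D' & excess D' pi = k]) /\
  (forall D' pi, injective pi -> topp_equiv D D' -> k <= excess D' pi).

Lemma has_rank_min_excess D r : has_rank D r -> min_excess D (r + 1).
Proof.
move=> [[f [f_ge0 [deg_f Df_neff]]] rank_min].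
have ge_r D' pi : injective pi -> topp_equiv D D' -> r + 1 <= excess D' pi.
  move=> pi_inj D_D'; have [E_ge0 DE_neff] := excess_cut pi D_D'.
  by rewrite leNgt; apply/negP => lt_r; apply: DE_neff; apply: rank_min.
split => //; have [D' [pi [pi_inj D_D' le_f]]] := excess_lift f_ge0 Df_neff.
by exists D', pi; split => //; apply/eqP; rewrite eq_le ge_r // andbT -deg_f.
Qed.

Lemma min_excess_has_rank D k : min_excess D k -> has_rank D (k - 1).
Proof.
move=> [[D' [pi [pi_inj D_D' exc_k]]] exc_min]; split.
  have [E_ge0 DE_neff] := excess_cut pi D_D'.
  by exists (excess_conf D' pi); split => //; split => //; rewrite -/(excess _ _) exc_k subrK.
move=> f f_ge0 deg_f; apply: NNPP => Df_neff.
have [D'' [pi' [pi'_inj D_D'' le_f]]] := excess_lift f_ge0 Df_neff.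
by have := exc_min _ _ pi'_inj D_D''; lia.
Qed.

(* Reversing the order exchanges D' - nu pi with -((K - D') - nu (-pi)). *)
Lemma excess_canon D' pi : injective pi ->
  excess (fun x => canon x - D' x) (fun y => - pi y) =
  excess D' pi - degree D' + ((m * n)%N%:Z - (m + n)%N%:Z).
Proof.
move=> pi_inj; rewrite -(degree_nu pi_inj) /excess /excess_conf /degree.
rewrite -sumrB -big_split /=.
apply: eq_bigr => x _; rewrite -canon_subr_nu // /pos_part.
by case: ifP; case: ifP; lia.
Qed.

Lemma min_excess_canon D k : min_excess D k ->
  min_excess (fun x => canon x - D x) (k - degree D + ((m * n)%N%:Z - (m + n)%N%:Z)).
Proof.
move=> [[D' [pi [pi_inj D_D' exc_k]]] exc_min].
have opp_inj pi0 : injective pi0 -> injective (fun y => - pi0 y).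
  by move=> pi0_inj x y /oppr_inj /pi0_inj.
split.
  exists (fun x => canon x - D' x), (fun y => - pi y); split; first exact: opp_inj.
    exact: topp_equiv_canon.
  by rewrite excess_canon // exc_k (topp_equiv_degree D_D').
move=> D'' pi' pi'_inj KD_D''.
have D_KD'' : topp_equiv D (fun x => canon x - D'' x).
  by have := topp_equiv_canon KD_D''; rewrite canonK.
have := exc_min _ _ (opp_inj _ pi'_inj) D_KD''.
rewrite excess_canon // -(topp_equiv_degree KD_D'') degreeB degree_canon; lia.
Qed.

Lemma riemann_roch D r : has_rank D r ->
  has_rank (fun x => canon x - D x) (r - degree D + ((m * n)%N%:Z - (m + n)%N%:Z)).
Proof.
move=> /has_rank_min_excess /min_excess_canon /min_excess_has_rank.
by have -> : forall a b c : int, a + 1 - b + c - 1 = a - b + c by move=> *; ring.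
Qed.

End RiemannRoch.

Section Relabelling.
Variables m n : nat.
Local Notation V := (vert m n).
Local Notation cfg := (config m n).
Implicit Types (u v : cfg) (s : V -> V).

Definition graph_aut s := [/\ bijective s, forall x y, adj (s x) (s y) = adj x y,
  forall x, gdeg (s x) = gdeg x & forall x, is_sink (s x) = is_sink x].

Lemma graph_aut_inv s : graph_aut s -> exists t, [/\ graph_aut t, cancel s t & cancel t s].
Proof.
case=> [[t st ts] s_adj s_gdeg s_sink]; exists t; split => //; split.
- by exists s.
- by move=> x y; rewrite -s_adj !ts.
- by move=> x; rewrite -s_gdeg ts.
- by move=> x; rewrite -s_sink ts.
Qed.

Lemma Delta_aut s c c' : graph_aut s -> Delta (s c) (s c') = Delta c c'.
Proof.
by case=> [[t st _] s_adj s_gdeg _]; rewrite /Delta s_adj s_gdeg (inj_eq (can_inj st)).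
Qed.

Lemma topp_equiv_aut s u v : graph_aut s -> topp_equiv u v ->
  topp_equiv (fun x => u (s x)) (fun x => v (s x)).
Proof.
move=> s_aut [z Hz]; exists (fun x => z (s x)) => c'; rewrite Hz.
case: (s_aut) => [[t st _] _ _ _].
by rewrite (reindex_inj (can_inj st)) /=; apply: eq_bigr => c _; rewrite Delta_aut.
Qed.

Lemma effective_aut s u : graph_aut s -> effective u -> effective (fun x => u (s x)).
Proof.
move=> s_aut [w [w_ge0 u_w]]; exists (fun x => w (s x)); split => [x|]; first exact: w_ge0.
exact: topp_equiv_aut.
Qed.

Lemma degree_aut s u : graph_aut s -> degree (fun x => u (s x)) = degree u.
Proof.
by case=> [[t st _] _ _ _]; rewrite /degree [in RHS](reindex_inj (can_inj st)).
Qed.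

Lemma rank_aut s u r : graph_aut s -> has_rank u r -> has_rank (fun x => u (s x)) r.
Proof.
move=> s_aut; have [t [t_aut st ts]] := graph_aut_inv s_aut.
move=> [[f [f_ge0 [deg_f uf_neff]]] rank_min]; split.
  exists (fun x => f (s x)); split => [x|]; first exact: f_ge0.
  split; first by rewrite degree_aut.
  move=> /(effective_aut t_aut) ufs_eff; apply: uf_neff.
  by apply: effective_ext ufs_eff => x /=; rewrite ts.
move=> g g_ge0 deg_g.
have := rank_min (fun x => g (t x)) (fun x => g_ge0 (t x)) ltac:(by rewrite degree_aut).
by move/(effective_aut s_aut); apply: effective_ext => x /=; rewrite st.
Qed.

Lemma parking_aut s u : graph_aut s -> parking u -> parking (fun x => u (s x)).
Proof.
move=> s_aut; have [t [_ st ts]] := graph_aut_inv s_aut.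
case: (s_aut) => [_ s_adj _ s_sink] [u_ge0 u_park].
split=> [c c_sink | C C0 C_sink]; first by apply: u_ge0; rewrite s_sink.
have sC0 : [set s x | x in C] != set0.
  by have [c cC] := set0Pn _ C0; apply/set0Pn; exists (s c); exact: imset_f.
have sC_sink c : c \in [set s x | x in C] -> ~~ is_sink c.
  by case/imsetP => x xC ->; rewrite s_sink; apply: C_sink.
have [c [c_sink Hc]] := u_park _ sC0 sC_sink.
exists (t c); split; first by rewrite -s_sink ts.
rewrite ts (_ : DeltaSet C (t c) = DeltaSet [set s x | x in C] c) //.
rewrite !DeltaSetE [in RHS](reindex_inj (can_inj st)) /=; apply: eq_bigr => y _.
have s_inj := can_inj st; move: (ts c); set c' := t c => <-.
by rewrite s_adj /indic !mem_imset.
Qed.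

Lemma canon_aut s x : graph_aut s -> canon (s x) = canon x.
Proof. by case=> _ _ s_gdeg _; rewrite /canon s_gdeg. Qed.

Definition relabel (a : {perm 'I_m}) (b : {perm 'I_n}) : V -> V :=
  fun x => match x with inl i => inl (a i) | inr j => inr (b j) end.

Lemma relabelM a a' b b' x :
  relabel a b (relabel a' b' x) = relabel (a' * a)%g (b' * b)%g x.
Proof. by case: x => [i|j] /=; rewrite permM. Qed.

Hypothesis hm : (0 < m)%N.

Lemma is_sink_inl (k : 'I_m) : ((k : nat) == m.-1) = ~~ (k < m.-1)%N.
Proof. by rewrite -leqNgt eqn_leq -ltnS prednK // ltn_ord. Qed.

Lemma relabel_aut a b : prefix_perm m.-1 a -> graph_aut (relabel a b).
Proof.
move=> a_pfx; split.
- by exists (relabel a^-1 b^-1) => [[i|j]|[i|j]] /=; rewrite ?permK ?permKV.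
- by case=> [i|j] [i'|j'].
- by case=> [i|j] /=; rewrite ?gdeg_inl ?gdeg_inr.
- by case=> [i|j] //=; rewrite !is_sink_inl a_pfx.
Qed.

Lemma exists_sorting_relabel w : exists p : {perm 'I_m} * {perm 'I_n},
  prefix_perm m.-1 p.1 /\ sorted_conf (fun x => w (relabel p.1 p.2 x)).
Proof.
have [a a_pfx a_sorted] := exists_sorting_perm m.-1 (fun i => w (inl i)).
have [b _ b_sorted] := exists_sorting_perm n (fun j => w (inr j)).
exists (a, b); split => //; split => [|j j' le_jj']; first exact: a_sorted.
exact: b_sorted le_jj' (ltn_ord j').
Qed.

Lemma sorted_conf_relabel_eq u a b : prefix_perm m.-1 a -> sorted_conf u ->
  sorted_conf (fun x => u (relabel a b x)) -> (fun x => u (relabel a b x)) = u.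
Proof.
move=> a_pfx [u_sa u_sb] [ua_sa ua_sb]; apply: functional_extensionality => -[i|j] /=.
- case: (ltnP i m.-1) => [i_lt | i_ge].
    exact: (sorted_prefix_perm_eq (x := fun i => u (inl i)) a_pfx u_sa ua_sa i_lt).
  have i_last : (i : nat) == m.-1 by rewrite is_sink_inl -leqNgt.
  have ai_last : (a i : nat) == m.-1 by rewrite is_sink_inl a_pfx -leqNgt.
  by congr (u (inl _)); apply: val_inj; rewrite /= (eqP ai_last) (eqP i_last).
- have b_pfx : prefix_perm n b by move=> j0; rewrite !ltn_ord.
  have u_sb' : sorted_prefix n (fun j => u (inr j)) by move=> j1 j2 le12 _; apply: u_sb.
  have ub_sb' : sorted_prefix n (fun j => u (inr (b j))) by move=> j1 j2 le12 _; apply: ua_sb.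
  exact: (sorted_prefix_perm_eq b_pfx u_sb' ub_sb' (ltn_ord j)).
Qed.

End Relabelling.

Section Duality.
Variables m n : nat.
Hypotheses (hm : (0 < m)%N) (hn : (0 < n)%N).
Local Notation V := (vert m n).
Local Notation cfg := (config m n).
Implicit Types u w : cfg.

Definition reduce u : cfg :=
  proj1_sig (constructive_indefinite_description _ (exists_parking hm hn u)).

Lemma reduce_spec u : parking (reduce u) /\ topp_equiv u (reduce u).
Proof. exact: proj2_sig (constructive_indefinite_description _ (exists_parking hm hn u)). Qed.

Lemma reduce_eq u w : parking w -> topp_equiv u w -> reduce u = w.
Proof.
move=> w_park u_w; have [red_park u_red] := reduce_spec u.
exact: parking_unique red_park w_park (topp_equiv_trans (topp_equiv_sym u_red) u_w).
Qed.

Definition sorting w : {perm 'I_m} * {perm 'I_n} :=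
  proj1_sig (constructive_indefinite_description _ (exists_sorting_relabel w)).

Definition sort_conf w : cfg := fun x => w (relabel (sorting w).1 (sorting w).2 x).

Lemma sorting_spec w : prefix_perm m.-1 (sorting w).1 /\ sorted_conf (sort_conf w).
Proof.
exact: proj2_sig (constructive_indefinite_description _ (exists_sorting_relabel w)).
Qed.

Lemma sort_conf_relabel u a b : prefix_perm m.-1 a -> sorted_conf u ->
  sort_conf (fun x => u (relabel a b x)) = u.
Proof.
move=> a_pfx u_sorted; have [a'_pfx sorted_ua] := sorting_spec (fun x => u (relabel a b x)).
move: a'_pfx sorted_ua; rewrite /sort_conf /=.
case: (sorting _) => a' b' /= a'_pfx.
have -> : (fun x => u (relabel a b (relabel a' b' x))) =
          (fun x => u (relabel (a' * a)%g (b' * b)%g x)).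
  by apply: functional_extensionality => x; rewrite relabelM.
by move=> /(sorted_conf_relabel_eq hm (prefix_permM a_pfx a'_pfx) u_sorted).
Qed.

Definition dual u : cfg := sort_conf (reduce (fun x => canon x - u x)).

Lemma genusE : ((m.-1 * n.-1)%N)%:Z = (m * n)%N%:Z - (m + n)%N%:Z + 1.
Proof. by case: m hm => // m' _; case: n hn => // n' _ /=; rewrite !PoszM !PoszD; lia. Qed.

(* By Riemann--Roch, K - u has rank r - deg u + g - 1 and degree 2g - 2 - deg u. *)
Lemma dual_para i j u : parking_sorted_with i j u -> parking_sorted_with j i (dual u).
Proof.
move=> [_ [_ [r [rank_u [-> ->]]]]].
set v := fun x => canon x - u x.
have [red_park v_red] := reduce_spec v.
have [a_pfx sorted_dual] := sorting_spec (reduce v).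
have s_aut := relabel_aut hm (sorting (reduce v)).2 a_pfx.
split; first exact: parking_aut s_aut red_park.
split; first exact: sorted_dual.
exists (r - degree u + ((m * n)%N%:Z - (m + n)%N%:Z)); split.
  exact: rank_aut s_aut (rank_topp_equiv v_red (riemann_roch hm hn rank_u)).
rewrite /dual -/v /sort_conf (degree_aut _ s_aut) -(topp_equiv_degree v_red) degreeB.
by rewrite degree_canon genusE; split; lia.
Qed.

Lemma dualK i j u : parking_sorted_with i j u -> dual (dual u) = u.
Proof.
move=> [u_park [u_sorted _]].
set v := fun x => canon x - u x.
have [red_park v_red] := reduce_spec v.
have [a_pfx _] := sorting_spec (reduce v).
set a := (sorting (reduce v)).1; set b := (sorting (reduce v)).2.
have s_aut := relabel_aut hm b a_pfx.
have dual_u_equiv : topp_equiv (fun x => canon x - dual u x) (fun x => u (relabel a b x)).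
  have -> : (fun x => canon x - dual u x) =
            (fun x => (fun y => canon y - reduce v y) (relabel a b x)).
    by apply: functional_extensionality => x; rewrite /= canon_aut.
  apply: (topp_equiv_aut (u := fun y => canon y - reduce v y) s_aut); apply: topp_equiv_sym.
  by have := topp_equiv_canon v_red; rewrite canonK.
rewrite /dual (reduce_eq (parking_aut s_aut u_park) dual_u_equiv).
exact: sort_conf_relabel.
Qed.

End Duality.

Theorem theorem14p1 (m n : nat) (hm : (0 < m)%N) (hn : (0 < n)%N) (i j : int) :
  exists f : {u : config m n | parking_sorted_with i j u} ->
             {u : config m n | parking_sorted_with j i u},
    bijective f.
Proof.
pose f (k l : int) (u : {u : config m n | parking_sorted_with k l u}) :=
  exist (parking_sorted_with l k) (dual hm hn (sval u)) (dual_para hm hn (svalP u)).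
have fK k l : cancel (@f k l) (@f l k).
  by case=> u pu; apply: eq_sig => [|?]; [exact: dualK pu | exact: proof_irrelevance].
by exists (@f i j), (@f j i).
Qed.
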